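(* Let $(V,d,k,q)$ be an instance of the individually fair $k$-center with outliers problem (IF$k$CO) as defined in the context, and let $(S,O,\sigma)$ be the solution output by the basic algorithm (Algorithm 2) described in the context. Then $$\alpha(S,O,\sigma)=\max_{i\in V\setminus O}\frac{d_{\sigma(i)i}}{NR_q(i)}\le 2.$$
   Context: IF$k$CO instance: a finite set $V$ with $|V|=n$, a metric $d$ on $V$ (nonnegative, symmetric, $d_{ii}=0$, triangle inequality), and integers $k\ge 1$ and $q\ge 0$. For $i\in V$, $NR_q(i)$ is the distance from $i$ to its $\lceil (n-q)/k\rceil$-th nearest neighbor in $V$, where $i$ counts as its own (first) nearest neighbor. A solution is $(S,O,\sigma)$ with $S,O\subseteq V$ and $\sigma:V\setminus O\to S$; its outlier-related fairness ratio is $\alpha(S,O,\sigma)=\max_{i\in V\setminus O} d_{\sigma(i)i}/NR_q(i)$. Algorithm 2: set $P:=V$, $S:=\emptyset$. While $P\neq\emptyset$ and $|S|<k$: pick $s\in P$ minimizing $NR_q(i)$ over $i\in P$; set $S:=S\cup\{s\}$ and $P:=\{i\in P: d_{is}>2\,NR_q(i)\}$. Then set $O:=P$ and, for each $i\in V\setminus O$, let $\sigma(i)$ be a center $h\in S$ minimizing $d_{ih}$. Output $(S,O,\sigma)$. *)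

From HB Require Import structures.
From mathcomp Require Import all_boot all_order all_algebra.
Set Implicit Arguments. Unset Strict Implicit. Unset Printing Implicit Defensive.
Import Order.TTheory GRing.Theory Num.Theory.
Local Open Scope ring_scope.

Section IFkCO.
Variables (R : realFieldType) (V : finType) (d : V -> V -> R) (k q : nat).

Definition is_metric : Prop :=
  [/\ forall i j, 0 <= d i j,
      forall i j, d i j = d j i,
      forall i, d i i = 0
    & forall i j l, d i l <= d i j + d j l].

(* m = ceil((n - q)/k), n = |V| (truncated subtraction: m = 0 when q >= n) *)
Definition nr_rank : nat := ((#|V| - q) + k.-1) %/ k.

(* NR_q(i): distance from i to its m-th nearest neighbour (i itself being the
   1st), i.e. the m-th smallest element of the multiset {d i j | j in V}.
   Convention for the degenerate case m = 0: the 1st one, i.e. 0. *)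
Definition NR (i : V) : R :=
  nth 0 (sort <=%R [seq d i j | j <- enum V]) nr_rank.-1.

Definition remaining (cs : seq V) : {set V} :=
  foldl (fun (P : {set V}) (s : V) => [set i in P | 2 * NR i < d i s]) [set: V] cs.

(* cs is the sequence of centers chosen by a (complete) run of Algorithm 2,
   in order, with arbitrary tie-breaking in the argmin:
   - each picked center s minimizes NR over the current P (and lies in P);
   - the loop runs only while |S| < k, and stops when P is empty or |S| = k. *)
Definition alg2_run (cs : seq V) : Prop :=
  [/\ forall pre s post, cs = pre ++ s :: post ->
        s \in remaining pre /\ (forall i, i \in remaining pre -> NR s <= NR i),
      (size cs <= k)%N
    & remaining cs = set0 \/ size cs = k].

(* (S, O, sigma) is an output of Algorithm 2; sigma : V \ O -> S is modelled by
   a total function whose values only matter on V \ O *)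
Definition alg2_output (S O : {set V}) (sigma : V -> V) : Prop :=
  exists cs, [/\ alg2_run cs, S = [set x in cs], O = remaining cs
    & forall i, i \notin O ->
        sigma i \in S /\ (forall h, h \in S -> d i (sigma i) <= d i h)].

(* outlier-related fairness ratio alpha(S,O,sigma) = max_{i in V\O} d(sigma i, i)/NR_q(i)
   (max over the empty set taken as 0) *)
Definition fairness_ratio (O : {set V}) (sigma : V -> V) : R :=
  \big[Num.max/0]_(i in ~: O) (d (sigma i) i / NR i).

End IFkCO.

From HB Require Import structures.
From mathcomp Require Import all_boot all_order all_algebra.
Import Order.TTheory GRing.Theory Num.Theory.
Local Open Scope ring_scope.

(* A point i survives the successive pruning steps exactly when every chosen
   center s is farther than 2 NR(i) from it; so every non-outlier lies within
   2 NR(i) of some center, hence of its nearest center sigma(i). *)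

Lemma mem_foldl_sieve (T : finType) (r : T -> T -> bool) (P : {set T})
    (cs : seq T) (i : T) :
  (i \in foldl (fun (A : {set T}) s => [set j in A | r j s]) P cs)
    = (i \in P) && all (r i) cs.
Proof.
elim: cs P => [|s cs IHcs] P /=; first by rewrite andbT.
by rewrite IHcs inE andbA.
Qed.

Section Remaining.
Context {R : realFieldType} {V : finType} (d : V -> V -> R) (k q : nat).

Lemma mem_remaining (cs : seq V) (i : V) :
  (i \in remaining d k q cs) = all (fun s => 2 * NR d k q i < d i s) cs.
Proof. by rewrite /remaining mem_foldl_sieve inE. Qed.

Lemma near_center_of_notin_remaining (cs : seq V) (i : V) :
  i \notin remaining d k q cs -> exists2 s, s \in cs & d i s <= 2 * NR d k q i.
Proof.
rewrite mem_remaining -has_predC => /hasP[s s_cs].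
by rewrite /= -leNgt; exists s.
Qed.

End Remaining.

(* No positivity of y is needed: for y <= 0 (including the junk case x / 0 = 0)
   the quotient is nonpositive. *)
Lemma ler_div_of_le_mul (F : realFieldType) (c x y : F) :
  0 <= c -> 0 <= x -> x <= c * y -> x / y <= c.
Proof.
move=> c_ge0 x_ge0 le_x_cy; have [y_gt0 | y_le0] := ltP 0 y.
  by rewrite ler_pdivrMr.
by apply: le_trans c_ge0; apply: mulr_ge0_le0; rewrite ?invr_le0.
Qed.

Theorem lemma3 (R : realFieldType) (V : finType) (d : V -> V -> R) (k q : nat)
  (hd : is_metric d) (hk : (1 <= k)%N)
  (S O : {set V}) (sigma : V -> V) :
  alg2_output d k q S O sigma ->
  fairness_ratio d k q O sigma <= 2.
Proof.
case: hd => d_ge0 dC _ _ [cs [_ -> -> sigma_nearest]].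
apply: bigmax_le => // i; rewrite inE => iO.
have [s s_cs le_is] := near_center_of_notin_remaining d k q _ _ iO.
have [_ sigma_min] := sigma_nearest i iO.
apply: ler_div_of_le_mul => //; rewrite dC.
by apply: le_trans le_is; apply: sigma_min; rewrite inE.
Qed.
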